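(* Let $N\ge 3$ and let $m:\mathbb R^{2N}\to\mathbb R$ be measurable and satisfy $$m(X-tV,V)=m(X,V)\quad\text{for all }X\in\mathcal Q^\circ,\ V\in F_X,\ t\in\mathbb R.$$ Then there is a measurable $m_0:\mathbb R\times\mathbb R^N\to\mathbb R$ such that $$m(X,V)=m_0\big(X\cdot(\mathsf E(V)\mathbf 1-\mathsf P(V)V),\,V\big)\quad\text{for all }X\in\mathcal Q^\circ,\ V\in F_X.$$
   Context: Fix an integer $N\ge 3$ and write $\mathbf 1=(1,\dots,1)\in\mathbb R^N$. Let $\mathcal Q^\circ=\{X=(x_1,\dots,x_N)\in\mathbb R^N: x_1<x_2<\dots<x_N\}$ and $\Delta=\{(u_1,u_2)\in\mathbb R^2:u_1=u_2\}$. For $X\in\mathcal Q^\circ$ and $U=(u_1,u_2)\in\mathbb R^2$ define $\psi(X,U)\in\mathbb R^N$ by $\psi_1=u_1$, $\psi_2=u_2$ and $\psi_i=\frac{(x_i-x_2)u_1-(x_i-x_1)u_2}{x_1-x_2}$ for $3\le i\le N$, and let $F_X=\{\psi(X,U):U\in\mathbb R^2\setminus\Delta\}$ (equivalently, the set of $V\in\mathbb R^N\setminus\mathbb R\mathbf 1$ such that $X+sV\in\mathbb R\mathbf 1$ for some $s\in\mathbb R$). Momentum and energy maps: $\mathsf P(V)=\sum_{i=1}^N v_i$, $\mathsf E(V)=|V|^2$. *)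

(* Vectors in R^N are N.-tuples (coordinates
   indexed by 'I_N, i.e. 0-based: paper's x_1, x_2 are tnth X 0, tnth X 1).
   R^N carries the product sigma-algebra of Borel(R) (library instance on
   n.-tuple), which is Borel(R^N); R^{2N} = R^N * R^N with the product
   sigma-algebra. *)
From mathcomp Require Import all_boot all_order all_algebra.
From mathcomp Require Import all_classical all_reals all_analysis.
Set Implicit Arguments. Unset Strict Implicit. Unset Printing Implicit Defensive.
Import Order.TTheory GRing.Theory Num.Theory.
Local Open Scope ring_scope.

Section Defs.
Context {R : realType} {N : nat}.

Definition Qo (X : N.-tuple R) : Prop :=
  forall i j : 'I_N, (i < j)%N -> tnth X i < tnth X j.

(* first two coordinates x_1, x_2 (0 if N is too small; irrelevant for N >= 3) *)
Definition c1 (X : N.-tuple R) : R := nth 0 (tval X) 0.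
Definition c2 (X : N.-tuple R) : R := nth 0 (tval X) 1.

Definition psi (X : N.-tuple R) (U : R * R) : N.-tuple R :=
  [tuple (if val i == 0%N then U.1
          else if val i == 1%N then U.2
          else ((tnth X i - c2 X) * U.1 - (tnth X i - c1 X) * U.2)
                 / (c1 X - c2 X)) | i < N].

Definition FX (X : N.-tuple R) : set (N.-tuple R) :=
  [set V | exists U : R * R, U.1 != U.2 /\ V = psi X U].

Definition momentum (V : N.-tuple R) : R := \sum_(i < N) tnth V i.
Definition energy (V : N.-tuple R) : R := \sum_(i < N) tnth V i ^+ 2.

Definition dotv (X Y : N.-tuple R) : R := \sum_(i < N) tnth X i * tnth Y i.

Definition tshift (X V : N.-tuple R) (t : R) : N.-tuple R :=
  [tuple tnth X i - t * tnth V i | i < N].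

Definition EPvec (V : N.-tuple R) : N.-tuple R :=
  [tuple energy V - momentum V * tnth V i | i < N].

End Defs.

(* For V = psi X U, X lies on the line { c 1 - s V }: the cone condition makes
   x_1 != x_2, which pins down c and s.  Translating X along V therefore
   reaches the diagonal point c 1, so m (X, V) = m (c 1, V).  On that line
   X . (E(V) 1 - P(V) V) = c (N E(V) - P(V)^2), and the factor is positive by
   Lagrange's identity because V has two distinct coordinates.  Hence c, and
   with it m (X, V), is a measurable function of X . (E(V) 1 - P(V) V) and V. *)
From mathcomp Require Import all_boot all_order all_algebra.
From mathcomp Require Import all_classical all_reals all_analysis.
From mathcomp Require Import measurable_realfun.
From mathcomp Require Import ring zify.
Import Order.TTheory GRing.Theory Num.Theory.
Local Open Scope ring_scope.
Local Open Scope classical_set_scope.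

Lemma measurable_invr (R : realType) : measurable_fun [set: R] (@GRing.inv R).
Proof.
have -> : [set: R] = [set 0] `|` [set r | r != 0].
  by apply/seteqP; split => x //= _; case: (eqVneq x 0) => [->|]; [left|right].
have mnz : measurable [set r : R | r != 0] by apply: open_measurable; exact: open_neq.
apply/measurable_funU => //; split.
- have inv0 : {in [set (0 : R)], cst 0 =1 @GRing.inv R}.
    by move=> x; rewrite inE /= => ->; rewrite invr0.
  exact: eq_measurable_fun inv0 (measurable_cst _).
- apply: open_continuous_measurable_fun => // x.
  by rewrite inE /= => x0; apply: inv_continuous.
Qed.

Section Spread.
Context {R : realType} {N : nat}.
Implicit Types V X : N.-tuple R.

Definition const_tuple (c : R) : N.-tuple R := [tuple c | _ < N].

Definition spread V : R := N%:R * energy V - momentum V ^+ 2.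

Lemma dotv_EPvec_line {V X} {c s : R} :
  (forall i, tnth X i = c - s * tnth V i) -> dotv X (EPvec V) = c * spread V.
Proof.
move=> hX; rewrite /dotv /spread.
rewrite (eq_bigr (fun i => c * energy V + (- (c * momentum V + s * energy V)) * tnth V i
                           + s * momentum V * tnth V i ^+ 2)); last first.
  by move=> i _; rewrite hX tnth_mktuple; ring.
rewrite !big_split /= -!mulr_sumr sumr_const card_ord -/(momentum V) -/(energy V).
rewrite -mulr_natr; ring.
Qed.

Lemma tshift_line {V X} {c s : R} :
  (forall i, tnth X i = c - s * tnth V i) -> tshift X V (- s) = const_tuple c.
Proof.
by move=> hX; apply: eq_from_tnth => i; rewrite !tnth_mktuple hX; ring.
Qed.

Lemma spread_lagrange V :
  2 * spread V = \sum_(i < N) \sum_(j < N) (tnth V i - tnth V j) ^+ 2.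
Proof.
have row i : \sum_(j < N) (tnth V i - tnth V j) ^+ 2
             = tnth V i ^+ 2 * N%:R - 2 * tnth V i * momentum V + energy V.
  rewrite (eq_bigr (fun j => tnth V i ^+ 2 - 2 * tnth V i * tnth V j + tnth V j ^+ 2));
    last by move=> j _; ring.
  by rewrite !big_split /= sumr_const card_ord mulr_natr sumrN -mulr_sumr.
rewrite (eq_bigr _ (fun i _ => row i)) !big_split /= sumrN -!mulr_suml -mulr_sumr.
by rewrite sumr_const card_ord -/(energy V) -/(momentum V) /spread mulr_natr; ring.
Qed.

Lemma spread_gt0 V i j : tnth V i != tnth V j -> 0 < spread V.
Proof.
move=> Vij; rewrite -(pmulr_rgt0 _ (ltr0n _ 2)) spread_lagrange.
apply: (@lt_le_trans _ _ ((tnth V i - tnth V j) ^+ 2)).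
  by rewrite lt_neqAle sqr_ge0 andbT eq_sym sqrf_eq0 subr_eq0.
rewrite (bigD1 i) //= (bigD1 j) //= -addrA lerDl.
by rewrite addr_ge0 ?sumr_ge0 // => *; rewrite ?sumr_ge0 // => *; exact: sqr_ge0.
Qed.

Lemma measurable_spread : measurable_fun [set: N.-tuple R] spread.
Proof.
have mP : measurable_fun [set: N.-tuple R] momentum.
  exact: measurable_sum (fun i => @measurable_tnth _ R N i).
have mE : measurable_fun [set: N.-tuple R] energy.
  by apply: measurable_sum => i; apply: measurable_funX; exact: measurable_tnth.
exact: measurable_funB (measurable_funM (measurable_cst _) mE) (measurable_funX _ mP).
Qed.

End Spread.

Section PsiLine.
Context {R : realType} {N : nat}.
Implicit Types X : N.-tuple R.

Lemma tnth_psi0 X U (i : 'I_N) : val i = 0%N -> tnth (psi X U) i = U.1.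
Proof. by move=> i0; rewrite tnth_mktuple i0. Qed.

Lemma tnth_psi1 X U (i : 'I_N) : val i = 1%N -> tnth (psi X U) i = U.2.
Proof. by move=> i1; rewrite tnth_mktuple i1. Qed.

(* The coefficients are read off from the first two coordinates. *)
Lemma psi_line {X U} : c1 X != c2 X -> U.1 != U.2 ->
  forall i, tnth X i = (c2 X * U.1 - c1 X * U.2) / (U.1 - U.2)
                       - (c2 X - c1 X) / (U.1 - U.2) * tnth (psi X U) i.
Proof.
move=> x12 u12 i; have dx : c1 X - c2 X != 0 by rewrite subr_eq0.
have du : U.1 - U.2 != 0 by rewrite subr_eq0.
rewrite tnth_mktuple; case: ifP => [/eqP i0|_].
  by rewrite (tnth_nth 0) i0 -/(c1 X); field.
case: ifP => [/eqP i1|_]; first by rewrite (tnth_nth 0) i1 -/(c2 X); field.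
by field; rewrite dx du.
Qed.

Lemma Qo_c1_lt_c2 X : (1 < N)%N -> Qo X -> c1 X < c2 X.
Proof.
move=> N1 hX; have N0 : (0 < N)%N by lia.
by have := hX (Ordinal N0) (Ordinal N1) isT; rewrite !(tnth_nth 0).
Qed.

End PsiLine.

Theorem proposition3p6 (R : realType) (N : nat) (hN : (3 <= N)%N)
  (m : (N.-tuple R * N.-tuple R)%type -> R)
  (mm : measurable_fun [set: (N.-tuple R * N.-tuple R)%type] m)
  (hinv : forall (X V : N.-tuple R) (t : R),
      Qo X -> FX X V -> m (tshift X V t, V) = m (X, V)) :
  exists m0 : (R * N.-tuple R)%type -> R,
    measurable_fun [set: (R * N.-tuple R)%type] m0 /\
    (forall X V : N.-tuple R, Qo X -> FX X V ->
       m (X, V) = m0 (dotv X (EPvec V), V)).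
Proof.
exists (fun p => m (const_tuple (p.1 / spread p.2), p.2)); split.
  apply: measurableT_comp mm _; apply: measurable_fun_pair => //.
  apply/measurable_fun_tnthP => i /=.
  have tnth_const (p : R * N.-tuple R) :
      p.1 / spread p.2 = tnth (const_tuple (p.1 / spread p.2)) i.
    by rewrite tnth_mktuple.
  apply: eq_measurable_fun (in1W tnth_const) _; apply: measurable_funM => //.
  exact: measurableT_comp (@measurable_invr R) (measurableT_comp measurable_spread _).
move=> X V hX [U [u12 ->]].
have N1 : (1 < N)%N by lia.
have x12 : c1 X != c2 X by rewrite lt_eqF // Qo_c1_lt_c2.
have line := psi_line x12 u12.
have spread_pos : 0 < spread (psi X U).
  apply: (@spread_gt0 _ _ _ (Ordinal (ltnW N1)) (Ordinal N1)).
  by rewrite tnth_psi0 // tnth_psi1.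
rewrite -(hinv X _ (- ((c2 X - c1 X) / (U.1 - U.2)))) //; last by exists U.
by rewrite (tshift_line line) (dotv_EPvec_line line) mulfK ?gt_eqF.
Qed.
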